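(* For every constant $C_1 > 1$ there exists a constant $C_2 > 1$ such that the following holds. Let $\psi:\mathbb{R}\to\mathbb{R}$ satisfy $-\log(1 - x + \frac{x^2}{2}) \le \psi(x) \le \log(1 + x + \frac{x^2}{2})$ for all $x \in \mathbb{R}$. Let $\delta\in(0,1)$, suppose $n > C_2\log\frac{1}{\delta}$, and let $T = \sigma\sqrt{\frac{n}{2\log\frac{2}{\delta}}}$. Let $x_1,\dots,x_n$ be i.i.d. real samples with mean $\mu$ and variance at most $\sigma^2$, and let $\mu_0\in\mathbb{R}$ be a given initial estimate with $|\mu_0 - \mu| \le C_1\sigma\sqrt{\frac{\log\frac{1}{\delta}}{n}}$. Define \[ \widehat{\mu} = \mu_0 + \frac{T}{n}\sum_{i=1}^n \psi\!\left(\frac{x_i - \mu_0}{T}\right). \] Then with probability at least $1-\delta$, \[ |\widehat{\mu} - \mu| \le \left(1 + C_2\frac{\log\frac{1}{\delta}}{n}\right)\cdot\sigma\cdot\sqrt{\frac{2\log\frac{2}{\delta}}{n}}. \] *)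

From HB Require Import structures.
From mathcomp Require Import all_boot all_order all_algebra.
From mathcomp Require Import all_classical all_reals all_analysis.
Set Implicit Arguments. Unset Strict Implicit. Unset Printing Implicit Defensive.
Import Order.TTheory GRing.Theory Num.Theory.
Local Open Scope classical_set_scope.
Local Open Scope ring_scope.

Definition mutually_independent d (T : measurableType d) (R : realType)
  (P : probability T R) (n : nat) (X : 'I_n -> T -> R) : Prop :=
  forall B : 'I_n -> set R, (forall i, measurable (B i)) ->
    P (\bigcap_(i in [set: 'I_n]) (X i @^-1` B i)) =
    (\prod_(i < n) P (X i @^-1` B i))%E.

Definition identically_distributed d (T : measurableType d) (R : realType)
  (P : probability T R) (n : nat) (X : 'I_n -> T -> R) : Prop :=
  forall (i j : 'I_n) (B : set R), measurable B ->
    P (X i @^-1` B) = P (X j @^-1` B).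

Definition catoni_estimator (R : realType) (psi : R -> R) (n : nat)
  (mu0 Tt : R) (x : 'I_n -> R) : R :=
  mu0 + Tt / n%:R * \sum_(i < n) psi ((x i - mu0) / Tt).

From HB Require Import structures.
From mathcomp Require Import all_boot all_order all_algebra.
From mathcomp Require Import all_classical all_reals all_analysis.
From mathcomp Require Import measurable_realfun ring lra.
Set Implicit Arguments.
Unset Strict Implicit.
Unset Printing Implicit Defensive.
Import Order.TTheory GRing.Theory Num.Theory HBNNSimple.
Local Open Scope classical_set_scope.
Local Open Scope ring_scope.

(* Write y_i = (x_i - mu0) / T.  The upper bound on psi
   gives exp (sum_i psi y_i) <= prod_i (1 + y_i + y_i^2 / 2); by independence
   the expectation of the product factorizes, and each factor has expectation
   1 + (mu - mu0) / T + (sigma^2 + (mu - mu0)^2) / (2 T^2) <= exp (...).  So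
   Markov's inequality bounds the probability of a large upper deviation of
   sum_i psi y_i by delta / 2, and the lower bound on psi does the same for
   - sum_i psi y_i.  Off these two events
     |mu_hat - mu| <= (sigma^2 + (mu - mu0)^2) / (2 T) + T log (2 / delta) / n
                    = sigma s + (mu - mu0)^2 s / (2 sigma),
   with s = sqrt (2 log (2 / delta) / n), and the hypothesis on mu0 bounds the
   last term by (C1^2 / 2) (log (1 / delta) / n) sigma s.
   Independence is only assumed for indicators; it is extended to products of
   nonnegative measurable functions one factor at a time, by monotone
   approximation with simple functions. *)

Lemma indic_comp (T U : Type) (R : numDomainType) (Y : T -> U) (A : set U) x :
  \1_A (Y x) = \1_(Y @^-1` A) x :> R.
Proof. by rewrite !indicE. Qed.

Lemma prod_indic_bigcap (T : Type) (R : numDomainType) (I : finType)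
    (A : I -> set T) x :
  \prod_i \1_(A i) x = \1_(\bigcap_(i in [set: I]) A i) x :> R.
Proof.
have [Ax|nAx] := pselect (forall i, A i x).
  by rewrite big1 => [|i _]; rewrite indicE mem_set // => i _; exact: Ax.
have [i0 nAi0x] : exists i, ~ A i x.
  by apply: contra_notP nAx => /forallNP nA i; exact: contra_notP (nA i).
rewrite (bigD1 i0) //= !indicE !memNset ?mul0r //.
by move=> /(_ i0 Logic.I).
Qed.

Lemma sum_lt_of_prod_lt (R : realType) (I : finType) (f p : I -> R) (b : R) :
  (forall i, expR (f i) <= p i) -> \prod_i p i < expR b -> \sum_i f i < b.
Proof.
move=> f_le prod_lt; rewrite -ltr_expR expR_sum; apply: le_lt_trans prod_lt.
by apply: ler_prod => i _; rewrite expR_ge0 f_le.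
Qed.

Lemma probability_setCU_ge d (T : measurableType d) (R : realType)
    (P : probability T R) (A B : set T) (a b : R) :
  measurable A -> measurable B -> (P A <= a%:E)%E -> (P B <= b%:E)%E ->
  ((1 - (a + b))%:E <= P (~` (A `|` B)))%E.
Proof.
move=> mA mB PA PB; rewrite probability_setC; last exact: measurableU.
rewrite EFinB; apply: leeD2l; rewrite leeN2 EFinD.
exact: le_trans (measureU2 P mA mB) (leeD PA PB).
Qed.

Section markov.
Local Open Scope ereal_scope.
Context d (T : measurableType d) (R : realType) (mu : {measure set T -> \bar R}).

Lemma measurable_superlevel_set (F : T -> R) (a : R) :
  measurable_fun setT F -> measurable [set x | a <= F x]%R.
Proof.
move=> mF; have -> : [set x | a <= F x]%R = F @^-1` `[a, +oo[%classic.
  by apply/seteqP; split => x /=; rewrite in_itv /= andbT.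
by rewrite -[X in measurable X]setTI; apply: mF => //; exact: measurable_itv.
Qed.

Lemma markov_integral (F : T -> R) (a : R) : measurable_fun setT F ->
  (forall x, 0 <= F x)%R -> (0 < a)%R ->
  a%:E * mu [set x | a <= F x]%R <= \int[mu]_x (F x)%:E.
Proof.
move=> mF F_ge0 a_gt0; have mA := measurable_superlevel_set a mF.
have m1A : measurable_fun setT (fun x => (\1_[set x | a <= F x]%R x : R)%:E).
  by apply/measurable_EFinP; exact: measurable_indic.
rewrite -[X in mu X]setIT -integral_indic // -ge0_integralZl //.
all: try by [rewrite lee_fin ltW | move=> x _; rewrite lee_fin indicE].
apply: ge0_le_integral => //.
- by move=> x _; rewrite -EFinM lee_fin mulr_ge0 ?indicE // ltW.
- exact: measurable_funeM.
- exact/measurable_EFinP.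
move=> x _; rewrite -EFinM lee_fin indicE.
have [aF|naF] := pselect (a <= F x)%R; first by rewrite mem_set ?mulr1.
by rewrite memNset ?mulr0.
Qed.

End markov.

Section weighted_integral.
Local Open Scope ereal_scope.
Context d (T : measurableType d) (R : realType) (mu : {measure set T -> \bar R}).
Variable Y : T -> R.
Hypothesis mY : measurable_fun setT Y.

Lemma integral_indic_comp (A : set R) : measurable A ->
  \int[mu]_x (\1_A (Y x))%:E = mu (Y @^-1` A).
Proof.
move=> mA; under eq_integral do rewrite indic_comp.
rewrite integral_indic ?setIT //.
by rewrite -[X in measurable X]setTI; apply: mY.
Qed.

Lemma integral_weighted_nnsfun_comp (W : T -> R) (s : {nnsfun R >-> R}) :
  measurable_fun setT W -> (forall x, 0 <= W x)%R ->
  \int[mu]_x (W x * s (Y x))%:E =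
  \sum_(y \in range s) y%:E * \int[mu]_x (W x * \1_(s @^-1` [set y]) (Y x))%:E.
Proof.
move=> mW W_ge0.
have s_ge0 y : range s y -> (0 <= y)%R by move=> [z _ <-]; exact: fun_ge0.
under eq_integral => x _ do rewrite fimfunE mulr_fsumr -fsumEFin //.
rewrite ge0_integral_fsum //.
- apply: eq_fsbigr => y /set_mem ry.
  rewrite -ge0_integralZl //.
  + by apply: eq_integral => x _; rewrite -EFinM mulrCA.
  + apply/measurable_EFinP; apply: measurable_funM => //.
    exact: measurableT_comp.
  + by move=> x _; rewrite lee_fin mulr_ge0 // indicE.
  + by rewrite lee_fin s_ge0.
- move=> y; apply/measurable_EFinP; apply: measurable_funM => //.
  by apply: measurable_funM => //; exact: measurableT_comp.
- move=> y x _; rewrite lee_fin mulr_ge0 //.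
  have [ry|nry] := pselect (range s y).
    by apply: mulr_ge0; [exact: s_ge0 | rewrite indicE].
  by rewrite indicE memNset ?mulr0 // => syx; apply: nry; exists (Y x).
Qed.

Variable W : T -> R.
Hypotheses (mW : measurable_fun setT W) (W_ge0 : forall x, (0 <= W x)%R).
Variable c : R.
Hypothesis c_ge0 : (0 <= c)%R.
Hypothesis integral_weighted_indic : forall A, measurable A ->
  \int[mu]_x (W x * \1_A (Y x))%:E = c%:E * mu (Y @^-1` A).

Lemma integral_weighted_nnsfun (s : {nnsfun R >-> R}) :
  \int[mu]_x (W x * s (Y x))%:E = c%:E * \int[mu]_x (s (Y x))%:E.
Proof.
have s_ge0 y : range s y -> (0 <= y)%R by move=> [z _ <-]; exact: fun_ge0.
have -> : \int[mu]_x (s (Y x))%:E = \int[mu]_x (cst 1%R x * s (Y x))%:E.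
  by apply: eq_integral => x _; rewrite mul1r.
rewrite !integral_weighted_nnsfun_comp // ge0_mule_fsumr; last first.
  move=> y; have [ry|nry] := pselect (range s y).
    rewrite mule_ge0 ?lee_fin ?s_ge0 // integral_ge0 // => x _.
    by rewrite lee_fin mul1r indicE.
  have -> : s @^-1` [set y] = set0.
    by apply/seteqP; split => // z /= szy; apply: nry; exists z.
  by rewrite indic0 integral0_eq ?mule0 // => x _; rewrite mulr0.
apply: eq_fsbigr => y /set_mem ry.
rewrite integral_weighted_indic; last exact: measurable_funPTI.
under eq_integral do rewrite mul1r.
by rewrite integral_indic_comp 1?muleCA //; exact: measurable_funPTI.
Qed.

Lemma integral_weighted_comp (f : R -> R) :
  measurable_fun setT f -> (forall y, 0 <= f y)%R ->
  \int[mu]_x (W x * f (Y x))%:E = c%:E * \int[mu]_x (f (Y x))%:E.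
Proof.
move=> mf f_ge0.
have mEf : measurable_fun setT (EFin \o f) by exact/measurable_EFinP.
pose h := nnsfun_approx measurableT mEf.
have h_cvg y : (h k y)%:E @[k --> \oo] --> (f y)%:E.
  by apply: (cvg_nnsfun_approx measurableT mEf) => // z _; rewrite lee_fin.
have h_nd y : {homo (fun k => h k y) : k l / (k <= l)%N >-> (k <= l)%R}.
  by move=> k l kl; have /lefP := nd_nnsfun_approx measurableT mEf kl; apply.
have mhY k : measurable_fun setT (fun x => h k (Y x)) by exact: measurableT_comp.
have -> : \int[mu]_x (f (Y x))%:E = limn (fun k => \int[mu]_x (h k (Y x))%:E).
  rewrite -monotone_convergence //.
  - by apply: eq_integral => x _; apply/esym/cvg_lim.
  - by move=> k; exact/measurable_EFinP.
  - by move=> k x _; rewrite lee_fin.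
  - by move=> x _ k l kl; rewrite lee_fin h_nd.
have -> : \int[mu]_x (W x * f (Y x))%:E =
    limn (fun k => \int[mu]_x (W x * h k (Y x))%:E).
  rewrite -monotone_convergence //.
  - apply: eq_integral => x _; apply/esym/cvg_lim => //.
    under eq_fun do rewrite EFinM.
    by rewrite EFinM; exact: cvgeZl (h_cvg (Y x)).
  - by move=> k; apply/measurable_EFinP; exact: measurable_funM.
  - by move=> k x _; rewrite lee_fin mulr_ge0.
  - by move=> x _ k l kl; rewrite lee_fin ler_wpM2l // h_nd.
rewrite -limeMl //.
  by congr (limn _); apply/funext => k; exact: integral_weighted_nnsfun.
apply: ereal_nondecreasing_is_cvgn => k l kl.
apply: ge0_le_integral => //; first by move=> x _; rewrite lee_fin.
- exact/measurable_EFinP.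
- exact/measurable_EFinP.
- by move=> x _; rewrite lee_fin h_nd.
Qed.

End weighted_integral.

Section independent_product.
Local Open Scope ereal_scope.
Context d (T : measurableType d) (R : realType) (P : probability T R).
Variables (n : nat) (X : 'I_n -> T -> R).
Hypothesis mX : forall i, measurable_fun setT (X i).
Hypothesis X_indep : mutually_independent P X.

(* Independence is the case [k = 0]; induction on [k] replaces the indicators
   by arbitrary nonnegative functions one factor at a time. *)
Definition integral_prod_factorizes (k : nat) := forall h : 'I_n -> R -> R,
  (forall i, measurable_fun setT (h i)) -> (forall i y, (0 <= h i y)%R) ->
  (forall i, \int[P]_x (h i (X i x))%:E \is a fin_num) ->
  (forall i : 'I_n, (k <= i)%N -> exists B, measurable B /\ h i = \1_B) ->
  \int[P]_x (\prod_i h i (X i x))%:E = \prod_i \int[P]_x (h i (X i x))%:E.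

Lemma integral_prod_factorizes0 : integral_prod_factorizes 0.
Proof.
move=> h _ _ _ h_indic.
have [B hB] := choice (fun i => h_indic i (leq0n i)).
have mB i : measurable (B i) by case: (hB i).
have hBE i : h i = \1_(B i) by case: (hB i).
have mXB i : measurable (X i @^-1` B i).
  by rewrite -[X in measurable X]setTI; exact: mX.
under eq_integral do under eq_bigr do rewrite hBE indic_comp.
under [RHS]eq_bigr do rewrite hBE integral_indic_comp //.
rewrite -X_indep // -[X in P X]setIT -integral_indic //; last first.
  exact: fin_bigcap_measurable.
by apply: eq_integral => x _; rewrite prod_indic_bigcap.
Qed.

Lemma integral_prod_indic_at (j : 'I_n) (h : 'I_n -> R -> R) (A : set R) :
  integral_prod_factorizes j -> measurable A ->
  (forall i, measurable_fun setT (h i)) -> (forall i y, (0 <= h i y)%R) ->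
  (forall i, \int[P]_x (h i (X i x))%:E \is a fin_num) ->
  (forall i : 'I_n, (j < i)%N -> exists B, measurable B /\ h i = \1_B) ->
  \int[P]_x ((\prod_(i | i != j) h i (X i x)) * \1_A (X j x))%:E =
  (\prod_(i | i != j) \int[P]_x (h i (X i x))%:E) * P (X j @^-1` A).
Proof.
move=> IH mA mh h_ge0 h_fin h_indic.
pose h' i := if i == j then \1_A else h i.
have h'E i : i != j -> h' i = h i by rewrite /h' => /negbTE ->.
have h'j : h' j = \1_A by rewrite /h' eqxx.
have mXjA : measurable (X j @^-1` A).
  by rewrite -[X in measurable X]setTI; exact: mX.
have mh' i : measurable_fun setT (h' i).
  by rewrite /h'; case: eqP => _ //; exact: measurable_indic.
have h'_ge0 i y : (0 <= h' i y)%R.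
  by rewrite /h'; case: eqP => _ //; rewrite indicE.
have h'_fin i : \int[P]_x (h' i (X i x))%:E \is a fin_num.
  rewrite /h'; case: eqP => [->|_] //.
  by rewrite (integral_indic_comp P (mX j) mA) fin_num_measure.
have h'_indic (i : 'I_n) : (j <= i)%N -> exists B, measurable B /\ h' i = \1_B.
  move=> ji; rewrite /h'; case: eqP => [_|/eqP ij]; first by exists A.
  apply: h_indic; rewrite ltn_neqAle ji andbT.
  by apply: contra ij => /eqP jE; apply/eqP/val_inj.
have := IH h' mh' h'_ge0 h'_fin h'_indic.
rewrite [in RHS](bigD1 j) //= h'j (integral_indic_comp P (mX j) mA) muleC.
under eq_integral do rewrite (bigD1 j) //= h'j mulrC.
under [in RHS]eq_bigr => i /h'E -> do [].
by under eq_integral do under eq_bigr => i /h'E -> do [].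
Qed.

Lemma integral_prod_factorizesS k : (k < n)%N ->
  integral_prod_factorizes k -> integral_prod_factorizes k.+1.
Proof.
move=> kn IH h mh h_ge0 h_fin h_indic.
pose j := Ordinal kn.
pose W x := (\prod_(i | i != j) h i (X i x))%R.
pose ce := \prod_(i | i != j) \int[P]_x (h i (X i x))%:E.
have ce_fin : ce \is a fin_num by exact: prode_fin_num.
have mW : measurable_fun setT W.
  rewrite /W; under eq_fun do rewrite big_mkcond /=.
  by apply: measurable_prod => i _; case: (i != j) => //; exact: measurableT_comp.
rewrite (bigD1 j) //= muleC -/ce -(fineK ce_fin).
under eq_integral do rewrite (bigD1 j) //= mulrC.
apply: (integral_weighted_comp (mX j) mW) => //.
- by move=> x; apply: prodr_ge0.
- move=> A mA; rewrite fineK //.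
  exact: integral_prod_indic_at.
Qed.

Lemma integral_prod_comp (h : 'I_n -> R -> R) :
  (forall i, measurable_fun setT (h i)) -> (forall i y, (0 <= h i y)%R) ->
  (forall i, \int[P]_x (h i (X i x))%:E \is a fin_num) ->
  \int[P]_x (\prod_i h i (X i x))%:E = \prod_i \int[P]_x (h i (X i x))%:E.
Proof.
have factorizes k : (k <= n)%N -> integral_prod_factorizes k.
  elim: k => [_|k IHk kn]; first exact: integral_prod_factorizes0.
  exact: integral_prod_factorizesS kn (IHk (ltnW kn)).
move=> mh h_ge0 h_fin; apply: (factorizes n (leqnn n)) => // i.
by rewrite leqNgt ltn_ord.
Qed.

Lemma measurable_prod_superlevel_set (f : R -> R) (a : R) :
  measurable_fun setT f -> measurable [set x | a <= \prod_i f (X i x)]%R.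
Proof.
move=> mf; apply: measurable_superlevel_set.
by apply: measurable_prod => i _; exact: measurableT_comp.
Qed.

Lemma prod_tail_bound (f : R -> R) (M a : R) :
  measurable_fun setT f -> (forall y, 0 <= f y)%R ->
  (forall i, \int[P]_x (f (X i x))%:E <= M%:E) ->
  P [set x | expR a <= \prod_i f (X i x)]%R <= (expR (n%:R * (M - 1) - a))%:E.
Proof.
move=> mf f_ge0 Ef_le.
have Ef_ge0 i : 0 <= \int[P]_x (f (X i x))%:E.
  by apply: integral_ge0 => x _; rewrite lee_fin.
have Ef_fin i : \int[P]_x (f (X i x))%:E \is a fin_num.
  by rewrite ge0_fin_numE // (le_lt_trans (Ef_le i)) ?ltry.
have mF : measurable_fun setT (fun x => \prod_i f (X i x))%R.
  by apply: measurable_prod => i _; exact: measurableT_comp.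
have prod_le :
    (\prod_i fine (\int[P]_x (f (X i x))%:E) <= expR (n%:R * (M - 1)))%R.
  rewrite expRM_natl -[n in (_ ^+ n)%R]card_ord -prodr_const.
  apply: ler_prod => i _; rewrite fine_ge0 //=.
  apply: le_trans (expR_ge1Dx _); rewrite addrC subrK -lee_fin fineK //.
have F_ge0 x : (0 <= \prod_i f (X i x))%R by apply: prodr_ge0.
have := markov_integral P mF F_ge0 (expR_gt0 a).
rewrite /= (integral_prod_comp (h := fun=> f)) //.
rewrite -(fineK (fin_num_measure P _ (measurable_prod_superlevel_set _ mf))).
under eq_bigr do rewrite -[\int[P]_x _](fineK (Ef_fin _)).
rewrite prodEFin -EFinM !lee_fin expRB ler_pdivlMr ?expR_gt0 // mulrC => le_a.
exact: le_trans le_a prod_le.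
Qed.

End independent_product.

Definition catoni_poly (R : realType) (e y : R) := 1 + e * y + y ^+ 2 / 2.

Lemma catoni_poly_gt0 (R : realType) (e y : R) :
  e ^+ 2 < 2 -> 0 < catoni_poly e y.
Proof. by move=> e2_lt2; have := sqr_ge0 (y + e); rewrite /catoni_poly; nra. Qed.

Lemma measurable_catoni_poly (R : realType) (e a b : R) :
  measurable_fun setT (fun y : R => catoni_poly e ((y - a) / b)).
Proof.
rewrite /catoni_poly; apply: measurable_funD; first apply: measurable_funD => //.
- apply: measurable_funM => //; apply: measurable_funM => //.
  exact: measurable_funB.
- apply: measurable_funM => //; apply: measurable_funX.
  by apply: measurable_funM => //; exact: measurable_funB.
Qed.

Section catoni_expectation.
Local Open Scope ereal_scope.
Context d (T : measurableType d) (R : realType) (P : probability T R).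

Lemma expectation_quadratic (Y : T -> R) (a b c : R) : Y \in Lfun P 2%:E ->
  \int[P]_x (a + b * Y x + c * Y x ^+ 2)%:E =
  a%:E + b%:E * 'E_P[Y] + c%:E * 'E_P[Y ^+ 2].
Proof.
move=> Y2; have Y1 : Y \in Lfun P 1.
  by apply: Lfun_subset12 Y2; exact: fin_num_measure.
have YY : (Y ^+ 2)%R \in Lfun P 1 by rewrite expr2; exact: Lfun2_mul_Lfun1.
transitivity 'E_P[((cst a \+ b \o* Y) \+ c \o* (Y ^+ 2))%R].
  by rewrite unlock; apply: eq_integral => x _ /=; rewrite (mulrC b) (mulrC c).
rewrite !expectationD ?expectation_cst ?expectationZl //.
all: try apply: rpredD.
all: try exact: Lfun_cst.
all: exact: (@Lfun_scale _ _ _ P _ _ 1%R).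
Qed.

Lemma integral_catoni_poly_le (Y : T -> R) (e mu sigma mu0 Tt : R) :
  (0 < Tt)%R ->
  Y \in Lfun P 2%:E -> 'E_P[Y] = mu%:E -> 'V_P[Y] <= (sigma ^+ 2)%:E ->
  \int[P]_x (catoni_poly e ((Y x - mu0) / Tt))%:E <=
  (catoni_poly e ((mu - mu0) / Tt) + (sigma / Tt) ^+ 2 / 2)%:E.
Proof.
move=> Tt_gt0 Y2 EY VY.
have Tt_neq0 : Tt != 0%R by rewrite gt_eqF.
pose a := (1 - e * mu0 / Tt + mu0 ^+ 2 / (2 * Tt ^+ 2))%R.
pose b := (e / Tt - mu0 / Tt ^+ 2)%R.
pose c := (2 * Tt ^+ 2)^-1%R.
have EY2_fin : 'E_P[Y ^+ 2] \is a fin_num.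
  by apply: expectation_fin_num; rewrite expr2; exact: Lfun2_mul_Lfun1.
have polyE y : catoni_poly e ((y - mu0) / Tt) = (a + b * y + c * y ^+ 2)%R.
  by rewrite /catoni_poly /a /b /c; field.
under eq_integral do rewrite polyE.
rewrite expectation_quadratic // EY -(fineK EY2_fin) -!EFinM -!EFinD lee_fin.
have EY2_le : (fine 'E_P[Y ^+ 2] <= sigma ^+ 2 + mu ^+ 2)%R.
  move: VY; rewrite varianceE // EY -(fineK EY2_fin) -EFin_expe -EFinB.
  by rewrite lee_fin; lra.
have c_ge0 : (0 <= c)%R by rewrite invr_ge0 mulr_ge0 // exprn_ge0 // ltW.
rewrite [leRHS](_ : _ = a + b * mu + c * (sigma ^+ 2 + mu ^+ 2))%R; last first.
  by rewrite /catoni_poly /a /b /c; field.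
by rewrite lerD2l ler_wpM2l.
Qed.

End catoni_expectation.

Section catoni_tail.
Local Open Scope ereal_scope.
Context d (T : measurableType d) (R : realType) (P : probability T R).
Variables (n : nat) (X : 'I_n -> T -> R).
Hypothesis mX : forall i, measurable_fun setT (X i).
Hypothesis X_indep : mutually_independent P X.
Variables (mu sigma : R).
Hypothesis X_L2 : forall i, X i \in Lfun P 2%:E.
Hypothesis X_mean : forall i, 'E_P[X i] = mu%:E.
Hypothesis X_var : forall i, 'V_P[X i] <= (sigma ^+ 2)%:E.

Lemma catoni_tail_bound (e mu0 Tt L : R) : (0 < Tt)%R -> (e ^+ 2 < 2)%R ->
  P [set x | expR (n%:R * (catoni_poly e ((mu - mu0) / Tt)
                            + (sigma / Tt) ^+ 2 / 2 - 1) + L)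
             <= \prod_i catoni_poly e ((X i x - mu0) / Tt)]%R
  <= (expR (- L))%:E.
Proof.
move=> Tt_gt0 e2_lt2.
set M := (catoni_poly e ((mu - mu0) / Tt) + (sigma / Tt) ^+ 2 / 2)%R.
apply: le_trans (@prod_tail_bound _ _ _ P n X mX X_indep
  (fun y => catoni_poly e ((y - mu0) / Tt)) M _ _ _ _) _.
- exact: measurable_catoni_poly.
- by move=> y; exact/ltW/catoni_poly_gt0.
- by move=> i; exact: integral_catoni_poly_le.
by rewrite opprD addrA subrr sub0r.
Qed.

End catoni_tail.

Lemma expR_catoni_psi_le (R : realType) (psi : R -> R) :
  (forall x, - ln (1 - x + x ^+ 2 / 2) <= psi x /\
             psi x <= ln (1 + x + x ^+ 2 / 2)) ->
  forall y, expR (psi y) <= catoni_poly 1 y /\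
            expR (- psi y) <= catoni_poly (-1) y.
Proof.
move=> psi_bounds y; have [psi_ge psi_le] := psi_bounds y.
have sqr1_lt2 : (1 : R) ^+ 2 < 2 by rewrite expr1n; lra.
have sqrN1_lt2 : (-1 : R) ^+ 2 < 2 by rewrite sqrrN.
split.
- rewrite -[catoni_poly 1 y]lnK ?posrE ?catoni_poly_gt0 // ler_expR.
  by rewrite /catoni_poly mul1r.
- rewrite -[catoni_poly (-1) y]lnK ?posrE ?catoni_poly_gt0 // ler_expR.
  by rewrite /catoni_poly mulN1r lerNl.
Qed.

Lemma catoni_estimator_error (R : realType) (n : nat) (S sigma mu mu0 Tt L : R) :
  0 < Tt -> (0 < n)%N ->
  S < n%:R * (catoni_poly 1 ((mu - mu0) / Tt)
              + (sigma / Tt) ^+ 2 / 2 - 1) + L ->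
  - S < n%:R * (catoni_poly (-1) ((mu - mu0) / Tt)
                + (sigma / Tt) ^+ 2 / 2 - 1) + L ->
  `|mu0 + Tt / n%:R * S - mu| <=
  (sigma ^+ 2 + (mu - mu0) ^+ 2) / (2 * Tt) + Tt * L / n%:R.
Proof.
move=> Tt_gt0 n_gt0 S_lt NS_lt.
have Tt_neq0 : Tt != 0 by rewrite gt_eqF.
have n_neq0 : n%:R != 0 :> R by rewrite pnatr_eq0 -lt0n.
have k_gt0 : 0 < Tt / n%:R by rewrite divr_gt0 // ltr0n.
set B := (sigma ^+ 2 + (mu - mu0) ^+ 2) / (2 * Tt) + Tt * L / n%:R.
have S_up : Tt / n%:R * S < (mu - mu0) + B.
  move: S_lt; rewrite -(ltr_pM2l k_gt0) => /lt_le_trans; apply.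
  rewrite le_eqVlt; apply/predU1P; left.
  by rewrite /B /catoni_poly; field; rewrite n_neq0 Tt_neq0.
have NS_up : Tt / n%:R * - S < - (mu - mu0) + B.
  move: NS_lt; rewrite -(ltr_pM2l k_gt0) => /lt_le_trans; apply.
  rewrite le_eqVlt; apply/predU1P; left.
  by rewrite /B /catoni_poly; field; rewrite n_neq0 Tt_neq0.
rewrite mulrN in NS_up; rewrite ler_norml; apply/andP; split; lra.
Qed.

Lemma catoni_error_le (R : realType) (C1 sigma n l L D Tt : R) :
  0 < sigma -> 0 < n -> 0 < L -> 0 <= l ->
  `|D| <= C1 * sigma * Num.sqrt (l / n) -> Tt = sigma * Num.sqrt (n / (2 * L)) ->
  (sigma ^+ 2 + D ^+ 2) / (2 * Tt) + Tt * L / n <=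
  (1 + (C1 ^+ 2 / 2 + 1) * l / n) * sigma * Num.sqrt (2 * L / n).
Proof.
move=> sigma_gt0 n_gt0 L_gt0 l_ge0 D_le ->.
set s := Num.sqrt (2 * L / n).
have s_gt0 : 0 < s by rewrite sqrtr_gt0 divr_gt0 // mulr_gt0.
have s2 : s ^+ 2 = 2 * L / n by rewrite sqr_sqrtr // ltW // divr_gt0 // mulr_gt0.
have TtE : sigma * Num.sqrt (n / (2 * L)) = sigma / s.
  by rewrite -invf_div sqrtrV ?ltW // divr_gt0 // mulr_gt0.
have D2_le : D ^+ 2 <= C1 ^+ 2 * sigma ^+ 2 * (l / n).
  have r_ge0 : 0 <= C1 * sigma * Num.sqrt (l / n) := le_trans (normr_ge0 D) D_le.
  have <- : (C1 * sigma * Num.sqrt (l / n)) ^+ 2 = C1 ^+ 2 * sigma ^+ 2 * (l / n).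
    by rewrite !exprMn sqr_sqrtr // divr_ge0 // ltW.
  by rewrite -[D ^+ 2]real_normK ?num_real // lerXn2r ?nnegrE.
have LE : L = n * s ^+ 2 / 2 by rewrite s2; field; rewrite gt_eqF.
rewrite TtE LE (_ : _ + _ = sigma * s + D ^+ 2 * (s / (2 * sigma))); last first.
  by field; rewrite !gt_eqF.
rewrite -mulrA [leRHS]mulrDl mul1r lerD2l.
have t_gt0 : 0 < s / (2 * sigma) by rewrite divr_gt0 // mulr_gt0.
apply: le_trans (ler_wpM2r (ltW t_gt0) D2_le) _.
rewrite [leLHS](_ : _ = C1 ^+ 2 / 2 * l / n * (sigma * s)); last first.
  by field; rewrite !gt_eqF.
apply: ler_wpM2r; first by rewrite mulr_ge0 // ltW.
by rewrite ler_pM2r ?invr_gt0 // ler_wpM2r // lerDl.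
Qed.

Theorem lemma11 (R : realType) (C1 : R) (hC1 : 1 < C1) :
  exists C2 : R, 1 < C2 /\
  forall (psi : R -> R),
    (forall x : R, - ln (1 - x + x ^+ 2 / 2) <= psi x /\
                   psi x <= ln (1 + x + x ^+ 2 / 2)) ->
  forall (delta : R), 0 < delta < 1 ->
  forall (n : nat), C2 * ln (delta^-1) < n%:R ->
  forall (sigma mu mu0 : R), 0 < sigma ->
  forall (d : measure_display) (T : measurableType d) (P : probability T R)
         (X : 'I_n -> {RV P >-> R}),
    mutually_independent P (fun i => X i) ->
    identically_distributed P (fun i => X i) ->
    (forall i, (X i : T -> R) \in Lfun P 2%:E) ->
    (forall i, ('E_P[X i] = mu%:E)%E) ->
    (forall i, ('V_P[X i] <= (sigma ^+ 2)%:E)%E) ->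
    `|mu0 - mu| <= C1 * sigma * Num.sqrt (ln (delta^-1) / n%:R) ->
  let Tt := sigma * Num.sqrt (n%:R / (2 * ln (2 / delta))) in
  exists E : set T, measurable E /\ ((1 - delta)%:E <= P E)%E /\
    forall w, E w ->
      `|catoni_estimator psi mu0 Tt (fun i => X i w) - mu|
        <= (1 + C2 * ln (delta^-1) / n%:R) * sigma
           * Num.sqrt (2 * ln (2 / delta) / n%:R).
Proof.
exists (C1 ^+ 2 / 2 + 1); split; first by nra.
move=> psi psi_bounds delta /andP[delta_gt0 delta_lt1] n n_large
  sigma mu mu0 sigma_gt0 d T P X X_indep _ X_L2 X_mean X_var mu0_near Tt.
have l_gt0 : 0 < ln delta^-1 by rewrite ln_gt0 // invf_gt1.
have n_gt0 : 0 < n%:R :> R by apply: lt_trans n_large; rewrite mulr_gt0 //; nra.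
have L_gt0 : 0 < ln (2 / delta) by rewrite ln_gt0 // ltr_pdivlMr //; lra.
have Tt_gt0 : 0 < Tt by rewrite mulr_gt0 // sqrtr_gt0 divr_gt0 // mulr_gt0.
have mX i : measurable_fun setT (X i : T -> R) by exact: measurable_funP.
(* [psi] need not be measurable: the good event is described through the
   quadratics that bound it. *)
pose A e := [set w | expR (n%:R * (catoni_poly e ((mu - mu0) / Tt)
                                   + (sigma / Tt) ^+ 2 / 2 - 1) + ln (2 / delta))
                     <= \prod_i catoni_poly e ((X i w - mu0) / Tt)].
have mA e : measurable (A e).
  exact: measurable_prod_superlevel_set (measurable_catoni_poly _ _ _).
have PA e : e ^+ 2 = 1 -> (P (A e) <= (delta / 2)%:E)%E.
  move=> e2; rewrite -[delta / 2]invf_div -[2 / delta]lnK ?posrE ?divr_gt0 //.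
  by rewrite -expRN; apply: catoni_tail_bound => //; rewrite e2; lra.
exists (~` (A 1 `|` A (-1))); split; first exact/measurableC/measurableU.
split.
  rewrite {1}(splitr delta); apply: probability_setCU_ge => //.
  - by apply: PA; rewrite expr1n.
  - by apply: PA; rewrite sqrrN expr1n.
move=> w /not_orP[/negP + /negP]; rewrite /A /= -!ltNge => lt1 ltN1.
have D_le : `|mu - mu0| <= C1 * sigma * Num.sqrt (ln delta^-1 / n%:R).
  by rewrite distrC.
apply: le_trans
  (catoni_error_le sigma_gt0 n_gt0 L_gt0 (ltW l_gt0) D_le (erefl Tt)).
apply: catoni_estimator_error; rewrite -?sumrN -?(ltr0n R) //.
- apply: sum_lt_of_prod_lt lt1 => i.
  exact: (expR_catoni_psi_le psi_bounds _).1.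
- apply: sum_lt_of_prod_lt ltN1 => i.
  exact: (expR_catoni_psi_le psi_bounds _).2.
Qed.
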